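(* In generalized non-signalling theory (box world), consider a system of boxes each of which has at least two possible outputs. Suppose $\mathbf{R}$ and $\mathbf{S}$ are vectors both representing the same effect $\mu$, where $\mathbf{R}$ has exactly one non-zero entry and $\mathbf{S}$ has no negative entries. Then $\mathbf{R}=\mathbf{S}$.
   Context: Box world (GNST): a box has a finite set of inputs and outputs. A system of boxes has as states all collections $p(\mathbf{a}|\mathbf{x})\ge0$ (output tuple $\mathbf{a}$, input tuple $\mathbf{x}$) that are normalized ($\sum_{\mathbf{a}}p(\mathbf{a}|\mathbf{x})=1$ for all $\mathbf{x}$) and no-signalling (for each box $i$, $\sum_{a_i}p(\mathbf{a}|\mathbf{x})$ is independent of $x_i$). An effect is any linear map $\mu$ from the set of states to $[0,1]$; a real vector $\mathbf{R}$ indexed by pairs $(\mathbf{a},\mathbf{x})$ represents $\mu$ if $\mu(\mathbf{p})=\sum_{\mathbf{a},\mathbf{x}}p(\mathbf{a}|\mathbf{x})R(\mathbf{a}|\mathbf{x})$ for every state $\mathbf{p}$. *)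

From HB Require Import structures.
From mathcomp Require Import all_boot all_order all_algebra.
From mathcomp Require Import reals.
Set Implicit Arguments. Unset Strict Implicit. Unset Printing Implicit Defensive.
Import Order.TTheory GRing.Theory Num.Theory.
Local Open Scope ring_scope.

Definition Outs (n : nat) (k : 'I_n -> nat) := {dffun forall i : 'I_n, 'I_(k i)}.
Definition Ins (n : nat) (m : 'I_n -> nat) := {dffun forall i : 'I_n, 'I_(m i)}.

Section Box.
Context (R : realType) (n : nat) (m k : 'I_n -> nat).

(* vectors indexed by pairs (output tuple a, input tuple x): p(a|x) *)
Definition boxvec := Outs k -> Ins m -> R.

Definition is_state (p : boxvec) : Prop :=
  [/\ (forall a x, 0 <= p a x),
      (forall x, \sum_(a : Outs k) p a x = 1) &
      (* no-signalling: marginal obtained by summing out a_i is independent of x_i *)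
      (forall (i : 'I_n) (a : Outs k) (x x' : Ins m),
          (forall j, j != i -> x j = x' j) ->
          \sum_(b : Outs k | [forall j, (j != i) ==> (b j == a j)]) p b x =
          \sum_(b : Outs k | [forall j, (j != i) ==> (b j == a j)]) p b x')].

Definition is_effect (mu : boxvec -> R) : Prop :=
  (forall p, is_state p -> 0 <= mu p <= 1) /\
  (forall p q (t : R), is_state p -> is_state q -> 0 <= t <= 1 ->
     mu (fun a x => t * p a x + (1 - t) * q a x) = t * mu p + (1 - t) * mu q).

Definition represents (Rv : boxvec) (mu : boxvec -> R) : Prop :=
  forall p, is_state p -> mu p = \sum_(a : Outs k) \sum_(x : Ins m) p a x * Rv a x.

End Box.

(** Deterministic local boxes — each box [i] answering input [z] with a fixed
    output [f i z] — are states, and probing an effect with them isolates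
    entries of a representing vector.  Since every box has two outputs, for
    [(a, x) <> (a0, x0)] some deterministic box outputs [a] on [x] but never
    [a0] on [x0]; it is invisible to [R], so the nonnegative [S] must vanish at
    [(a, x)].  Both vectors are then supported at [(a0, x0)], and the constant
    deterministic box outputting [a0] reads off [R a0 x0 = S a0 x0]. *)
From HB Require Import structures.
From mathcomp Require Import all_boot all_order all_algebra.
From mathcomp Require Import reals.
Set Implicit Arguments. Unset Strict Implicit. Unset Printing Implicit Defensive.
Import Order.TTheory GRing.Theory Num.Theory.
Local Open Scope ring_scope.

Definition ord_other (K : nat) (hK : (1 < K)%N) (c : 'I_K) : 'I_K :=
  if c == 0 :> nat then Ordinal hK else Ordinal (ltnW hK).

Lemma ord_other_neq (K : nat) (hK : (1 < K)%N) (c : 'I_K) : ord_other hK c != c.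
Proof.
rewrite /ord_other; case: (eqVneq (c : nat) 0) => [c0 | c0];
  by rewrite -(inj_eq val_inj) /= ?c0 // eq_sym.
Qed.

Section DeterministicBoxes.
Variables (R : realType) (n : nat) (m k : 'I_n -> nat).

Definition pairing (p V : boxvec R m k) : R :=
  \sum_(a : Outs k) \sum_(x : Ins m) p a x * V a x.

Lemma represents_pairing (V : boxvec R m k) mu p :
  represents V mu -> is_state p -> mu p = pairing p V.
Proof. by move=> hV /hV. Qed.

Lemma pairing_supported (p V : boxvec R m k) a0 x0 :
  (forall a x, (a, x) != (a0, x0) -> V a x = 0) ->
  pairing p V = p a0 x0 * V a0 x0.
Proof.
move=> V0; rewrite /pairing (bigD1 a0) //= (bigD1 x0) //= big1 => [|x hx].
  rewrite addr0 big1 ?addr0 // => a ha.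
  by apply: big1 => x _; rewrite V0 ?mulr0 // xpair_eqE negb_and ha.
by rewrite V0 ?mulr0 // xpair_eqE eqxx.
Qed.

Lemma pairing_ge_entry (p V : boxvec R m k) a x :
  (forall a x, 0 <= p a x) -> (forall a x, 0 <= V a x) ->
  p a x * V a x <= pairing p V.
Proof.
move=> p0 V0; rewrite /pairing (bigD1 a) //= (bigD1 x) //= -addrA lerDl.
by rewrite addr_ge0 // !sumr_ge0 // => *; rewrite ?sumr_ge0 // => *; apply: mulr_ge0.
Qed.

Definition detout (f : forall i, 'I_(m i) -> 'I_(k i)) (x : Ins m) : Outs k :=
  [ffun i => f i (x i)].

Definition detbox (f : forall i, 'I_(m i) -> 'I_(k i)) : boxvec R m k :=
  fun a x => (a == detout f x)%:R.

Lemma sumr_indicator (P : pred (Outs k)) (c : Outs k) :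
  \sum_(b | P b) ((b == c)%:R : R) = (P c)%:R.
Proof.
case Pc: (P c); last by rewrite big1 // => b Pb; case: eqP Pb => // ->; rewrite Pc.
by rewrite (bigD1 c) //= eqxx big1 ?addr0 // => b /andP[_ /negbTE ->].
Qed.

Lemma detbox_state f : is_state (detbox f).
Proof.
split=> [a x | x | i a x x' xx'].
- exact: ler0n.
- by rewrite /detbox (sumr_indicator xpredT).
rewrite /detbox !sumr_indicator; congr (nat_of_bool _)%:R.
apply: eq_forallb => j; case: (eqVneq j i) => //= ji.
by rewrite /detout !ffunE xx'.
Qed.

Lemma detbox_separates (hk : forall i, (1 < k i)%N) a x a0 x0 :
  (a, x) != (a0, x0) ->
  exists f, detbox f a x = 1 /\ detbox f a0 x0 = 0.
Proof.
move=> hax; pose f i z := if z == x i then a i else ord_other (hk i) (a0 i).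
have fx : detout f x = a by apply/ffunP => i; rewrite ffunE /f eqxx.
exists f; rewrite /detbox fx eqxx; split=> //.
case: eqP => // a0f; case/negP: hax.
have fi i : f i (x0 i) = a0 i by rewrite a0f ffunE.
have x0x : x0 = x.
  apply/ffunP => i; move: (fi i); rewrite /f; case: eqP => // _ /eqP.
  by rewrite (negbTE (ord_other_neq _ _)).
by rewrite a0f x0x fx.
Qed.

Lemma nonneg_representation_vanishes (hk : forall i, (1 < k i)%N)
    mu (Rv Sv : boxvec R m k) a0 x0 :
  represents Rv mu -> represents Sv mu ->
  (forall a x, (a, x) != (a0, x0) -> Rv a x = 0) ->
  (forall a x, 0 <= Sv a x) ->
  forall a x, (a, x) != (a0, x0) -> Sv a x = 0.
Proof.
move=> hR hS R0 S0 a x hax; have [f [fax fa0x0]] := detbox_separates hk hax.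
have st := detbox_state f.
have pair0 : pairing (detbox f) Sv = 0.
  by rewrite -(represents_pairing hS st) (represents_pairing hR st)
             (pairing_supported _ R0) fa0x0 mul0r.
have Sax : Sv a x <= pairing (detbox f) Sv.
  by rewrite -[leLHS]mul1r -[X in X * _]fax pairing_ge_entry // => *; apply: ler0n.
by apply/eqP; rewrite eq_le S0 andbT -pair0.
Qed.

End DeterministicBoxes.

Theorem lemma9 (R : realType) (n : nat) (m k : 'I_n -> nat)
    (hk : forall i, (2 <= k i)%N)
    (mu : boxvec R m k -> R) (Rv Sv : boxvec R m k)
    (hmu : is_effect mu)
    (hR : represents Rv mu) (hS : represents Sv mu)
    (hRone : exists (a0 : Outs k) (x0 : Ins m),
        Rv a0 x0 != 0 /\ forall a x, (a, x) != (a0, x0) -> Rv a x = 0)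
    (hSnn : forall a x, 0 <= Sv a x) :
  forall a x, Rv a x = Sv a x.
Proof.
have [a0 [x0 [_ R0]]] := hRone.
have S0 := nonneg_representation_vanishes hk hR hS R0 hSnn.
move=> a x; case: (eqVneq (a, x) (a0, x0)) => [[-> ->] | hax]; last first.
  by rewrite R0 // S0.
pose f i (_ : 'I_(m i)) := a0 i.
have st := detbox_state R f.
have f1 : detbox R f a0 x0 = 1.
  rewrite /detbox (_ : detout f x0 = a0) ?eqxx //.
  by apply/ffunP => i; rewrite ffunE.
have := represents_pairing hS st.
rewrite (represents_pairing hR st) (pairing_supported _ R0) (pairing_supported _ S0).
by rewrite f1 !mul1r.
Qed.
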